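(* Let $\eta>0$, let $m^1,m^2,\dots\in\mathbb{R}^n$ be arbitrary loss predictions and $\ell^1,\ell^2,\dots\in\mathbb{R}^n$ arbitrary losses, set $x^0=\mathbf{1}/n$ and $v^t=\langle m^t,x^{t-1}\rangle\mathbf{1}-m^t$. (i) The procedure in $\Gamma$ that at each time $t$ takes $\theta^t=\arg\min_{\theta\in\mathbb{R}^n_{\ge0}}\{\langle L^{t-1}-v^t,\theta\rangle+\tfrac{1}{2\eta}\|\theta\|_2^2\}$ with $L^{t-1}=-\sum_{\tau<t}u(x^\tau,\ell^\tau)$ (predictive FTRL on $\mathbb{R}^n_{\ge0}$ with regularizer $\tfrac12\|\cdot\|_2^2$ and prediction $-v^t$) and plays $x^t=g(\theta^t)$ produces exactly the iterates of PRM. (ii) The procedure that sets $z^0=0$, at time $t$ takes $\theta^t=\arg\min_{\theta\in\mathbb{R}^n_{\ge0}}\{\langle -v^t,\theta\rangle+\tfrac{1}{2\eta}\|\theta-z^{t-1}\|_2^2\}$, plays $x^t=g(\theta^t)$, and after observing $\ell^t$ sets $z^t=\arg\min_{z\in\mathbb{R}^n_{\ge0}}\{\langle -u(x^t,\ell^t),z\rangle+\tfrac1{2\eta}\|z-z^{t-1}\|_2^2\}$ (predictive OMD) produces exactly the iterates of PRM$^+$. In both cases the iterates are independent of $\eta$ (with the same fixed point of $\Delta^n$ used whenever $\theta^t=0$). (iii) Both PRM and PRM$^+$ satisfy, for every $T\ge1$ and every $\hat{x}\in\Delta^n$, \[ R^T(\hat{x})=\sum_{t=1}^T\langle\ell^t,x^t-\hat{x}\rangle\le\sqrt2\Big(\sum_{t=1}^T\big\|\langle\ell^t,x^t\rangle\mathbf{1}-\langle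 m^t,x^{t-1}\rangle\mathbf{1}-(\ell^t-m^t)\big\|_2^2\Big)^{1/2}. \]
   Context: $\Delta^n=\{x\in\mathbb{R}^n_{\ge0}:\|x\|_1=1\}$; $\mathbf{1}$ is the all-ones vector; $[\cdot]^+$ is componentwise positive part. The game $\Gamma$ has Player 1 action set $\Delta^n$, Player 2 action set $\mathbb{R}^n$ (loss vectors), target set $\mathbb{R}^n_{\le0}$, and payoff $u(x,\ell)=\langle\ell,x\rangle\mathbf{1}-\ell$. For $a\in\mathbb{R}^n_{\ge0}$, $g(a)=a/\|a\|_1$ if $a\ne0$ and a fixed arbitrary point $\bar{x}\in\Delta^n$ if $a=0$. Predictive regret matching (PRM): $r^0=0$, $x^0=\mathbf{1}/n$; at time $t$, given prediction $m^t$, $\theta^t=[r^{t-1}+\langle m^t,x^{t-1}\rangle\mathbf{1}-m^t]^+$ and $x^t=g(\theta^t)$; after observing $\ell^t$, $r^t=r^{t-1}+\langle\ell^t,x^t\rangle\mathbf{1}-\ell^t$. Predictive regret matching$^+$ (PRM$^+$): $z^0=0$, $x^0=\mathbf{1}/n$; at time $t$, $\theta^t=[z^{t-1}+\langle m^t,x^{t-1}\rangle\mathbf{1}-m^t]^+$ and $x^t=g(\theta^t)$; after observing $\ell^t$, $z^t=[z^{t-1}+\langle\ell^t,x^t\rangle\mathbf{1}-\ell^t]^+$. *)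

From HB Require Import structures.
From mathcomp Require Import all_boot all_order all_algebra.
From mathcomp Require Import reals.
Set Implicit Arguments. Unset Strict Implicit. Unset Printing Implicit Defensive.
Import Order.TTheory GRing.Theory Num.Theory.
Local Open Scope ring_scope.

Section Defs.
Variables (R : realType) (n : nat).

Definition vec := 'I_n -> R.

Definition dot (x y : vec) : R := \sum_(i < n) x i * y i.
Definition sqnorm2 (x : vec) : R := \sum_(i < n) x i ^+ 2.
Definition norm1 (x : vec) : R := \sum_(i < n) `|x i|.

Definition zerov : vec := fun _ => 0.
Definition onesv : vec := fun _ => 1.
Definition unifv : vec := fun _ => (n%:R)^-1.

Definition in_simplex (x : vec) : Prop :=
  (forall i, 0 <= x i) /\ \sum_(i < n) x i = 1.
Definition nonneg (x : vec) : Prop := forall i, 0 <= x i.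

Definition pos (a : vec) : vec := fun i => Num.max (a i) 0.

Definition g (xbar : vec) (a : vec) : vec :=
  if [forall i, a i == 0] then xbar else fun i => a i / norm1 a.

Definition u (x l : vec) : vec := fun i => dot l x - l i.

Definition is_argmin (f : vec -> R) (S : vec -> Prop) (theta : vec) : Prop :=
  S theta /\ forall theta', S theta' -> f theta <= f theta'.

(* Predictive regret matching: state (r^t, x^t); m t, l t used for t >= 1. *)
Fixpoint prm_state (xbar : vec) (m l : nat -> vec) (t : nat) : vec * vec :=
  match t with
  | 0 => (zerov, unifv)
  | t'.+1 =>
    let: (r, x) := prm_state xbar m l t' in
    let theta := pos (fun i => r i + dot (m t) x - m t i) in
    let x' := g xbar theta in
    ((fun i => r i + dot (l t) x' - l t i), x')
  end.
Definition prm_x xbar m l t : vec := (prm_state xbar m l t).2.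

Fixpoint prmp_state (xbar : vec) (m l : nat -> vec) (t : nat) : vec * vec :=
  match t with
  | 0 => (zerov, unifv)
  | t'.+1 =>
    let: (z, x) := prmp_state xbar m l t' in
    let theta := pos (fun i => z i + dot (m t) x - m t i) in
    let x' := g xbar theta in
    (pos (fun i => z i + dot (l t) x' - l t i), x')
  end.
Definition prmp_x xbar m l t : vec := (prmp_state xbar m l t).2.

Definition regret (x l : nat -> vec) (T : nat) (xhat : vec) : R :=
  \sum_(1 <= t < T.+1) dot (l t) (fun i => x t i - xhat i).

Definition pred_err (x m l : nat -> vec) (T : nat) : R :=
  \sum_(1 <= t < T.+1)
    sqnorm2 (fun i => dot (l t) (x t) - dot (m t) (x t.-1) - (l t i - m t i)).

End Defs.

(* Two geometric facts drive everything.
   - Proximal steps on R^n_{>=0}: the minimizer of <c, t> + ||t - z||^2/(2 eta)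
     over the orthant is [z - eta c]^+ (argmin_prox_orthant).  Since [.]^+
     is positively homogeneous and g is scale invariant, the FTRL leader
     (resp. OMD iterate) is eta times the PRM regret vector r^t (resp. the
     PRM+ vector z^t), so both procedures play exactly the PRM (resp. PRM+)
     decisions for every eta > 0: parts (i) and (ii).
   - Blackwell orthogonality <a, u(g(a), l)> = 0 for a >= 0 (g_orthogonal)
     turns the expansion of ([r + u]^+)^2 into the one-step potential bound
     ||[r^{t+1}]^+||^2 <= ||[r^t]^+||^2 + ||u(x^{t+1}, l^{t+1}) - u(x^t, m^{t+1})||^2
     (potential_step), the last term being the prediction error.
   Summing, ||[r^T]^+||^2 (resp. ||[z^T]^+||^2) is at most the accumulated
   prediction error; as the regret is a simplex average of the cumulative
   payoff, which r^T equals and z^T dominates, part (iii) follows. *)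
From HB Require Import structures.
From mathcomp Require Import all_boot all_order all_algebra.
From mathcomp Require Import reals.
From mathcomp Require Import ring lra.
From Stdlib Require Import FunctionalExtensionality.
Import Order.TTheory GRing.Theory Num.Theory.
Local Open Scope ring_scope.

Section ScalarFacts.
Context {R : realFieldType}.

Lemma max0_pscale (eta a : R) : 0 < eta -> Num.max (eta * a) 0 = eta * Num.max a 0.
Proof. by move=> eta_gt0; rewrite maxr_pMr ?ltW // mulr0. Qed.

(* Quadratic growth of the one-dimensional proximal objective
   phi(s) = c s + (s - z)^2 / (2 eta) on [0, +oo) around its minimizer
   p = [z - eta c]^+ : phi(s) - phi(p) >= (s - p)^2 / (2 eta). *)
Lemma prox_scalar_growth (eta c z s : R) : 0 < eta -> 0 <= s ->
  (s - Num.max (z - eta * c) 0) ^+ 2 / (2 * eta) <=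
  (c * s + (2 * eta)^-1 * (s - z) ^+ 2)
  - (c * Num.max (z - eta * c) 0 + (2 * eta)^-1 * (Num.max (z - eta * c) 0 - z) ^+ 2).
Proof.
move=> eta_gt0 s_ge0.
set k := (2 * eta)^-1.
have k_eta : k * (2 * eta) = 1 by rewrite mulVf // gt_eqF // mulr_gt0.
have k_gt0 : 0 < k by rewrite invr_gt0 mulr_gt0.
case: (lerP (z - eta * c) 0) => hz; rewrite ?(maxEle, maxElt) ?hz /=.
- have slope_ge0 : 0 <= c - 2 * k * z.
    have : 2 * k * z <= 2 * k * (eta * c) by rewrite ler_pM2l ?mulr_gt0 //; lra.
    have -> : 2 * k * (eta * c) = (k * (2 * eta)) * c by ring.
    rewrite k_eta mul1r; lra.
  have : 0 <= s * (c - 2 * k * z) by rewrite mulr_ge0.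
  nra.
- set p := z - eta * c.
  have -> : z = p + eta * c by rewrite /p; ring.
  have : (s - p) * c * (1 - k * (2 * eta)) = 0 by rewrite k_eta subrr mulr0.
  nra.
Qed.

Lemma pos_part_sq_step (r v d : R) :
  Num.max (r + v + d) 0 ^+ 2 <=
  Num.max r 0 ^+ 2 + 2 * Num.max (r + v) 0 * (v + d) + d ^+ 2.
Proof.
case: (lerP (r + v + d) 0) => h1; case: (lerP r 0) => h2;
  case: (lerP (r + v) 0) => h3; rewrite ?(maxEle, maxElt) ?h1 ?h2 ?h3 /=; nra.
Qed.

End ScalarFacts.

Section OrthantGeometry.
Context {R : realType} {n : nat}.
Implicit Types (a c z th : vec R n) (eta : R).

Lemma pos_nonneg a : nonneg (pos a).
Proof. by move=> i; rewrite /pos le_max lexx orbT. Qed.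

Lemma pos_pscale eta a : 0 < eta ->
  pos (fun i => eta * a i) = (fun i => eta * pos a i).
Proof. by move=> eta_gt0; apply: functional_extensionality => i; exact: max0_pscale. Qed.

(* Normalization onto the simplex is invariant under positive scaling;
   this is why none of the iterates depends on the step size eta. *)
Lemma g_pscale (xbar a : vec R n) {eta : R} : 0 < eta ->
  g xbar (fun i => eta * a i) = g xbar a.
Proof.
move=> eta_gt0; rewrite /g.
have -> : [forall i, eta * a i == 0] = [forall i, a i == 0].
  by apply: eq_forallb => i; rewrite mulf_eq0 (gt_eqF eta_gt0).
case: ifP => // _; apply: functional_extensionality => i.
have -> : norm1 (fun i => eta * a i) = eta * norm1 a.
  by rewrite /norm1 mulr_sumr; apply: eq_bigr => j _; rewrite normrM gtr0_norm.
by rewrite invfM mulrACA mulfV ?gt_eqF // mul1r.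
Qed.

Lemma argmin_prox_orthant {F : vec R n -> R} {c z th eta} : 0 < eta ->
  (forall t, F t = dot c t + (2 * eta)^-1 * sqnorm2 (fun i => t i - z i)) ->
  is_argmin F (@nonneg R n) th -> th = pos (fun i => z i - eta * c i).
Proof.
move=> eta_gt0 F_def [th_ge0 th_min].
set p := pos _.
have F_sum t : F t = \sum_i (c i * t i + (2 * eta)^-1 * (t i - z i) ^+ 2).
  by rewrite F_def /dot /sqnorm2 mulr_sumr -big_split.
have term_ge0 i : 0 <= (th i - p i) ^+ 2 / (2 * eta).
  by rewrite divr_ge0 ?sqr_ge0 // mulr_ge0 // ltW.
have gap_le0 : \sum_i (th i - p i) ^+ 2 / (2 * eta) <= 0.
  apply: (le_trans (y := F th - F p)).
    by rewrite !F_sum -sumrB; apply: ler_sum => i _; exact: prox_scalar_growth.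
  by rewrite subr_le0; apply: th_min; apply: pos_nonneg.
have gap0 : \sum_i (th i - p i) ^+ 2 / (2 * eta) = 0.
  by apply/eqP; rewrite eq_le gap_le0 sumr_ge0.
apply: functional_extensionality => i.
move: (psumr_eq0P (fun j _ => term_ge0 j) gap0 (i := i) isT) => /eqP.
rewrite mulf_eq0 invr_eq0 (gt_eqF (mulr_gt0 _ eta_gt0)) // orbF sqrf_eq0.
by rewrite subr_eq0 => /eqP.
Qed.

Lemma g_orthogonal (xbar l a : vec R n) : nonneg a -> dot a (u (g xbar a) l) = 0.
Proof.
move=> a_ge0; rewrite /dot /g; case: ifP => [/forallP a0 | a_neq0].
  by apply: big1 => i _; rewrite (eqP (a0 i)) mul0r.
have norm1E : norm1 a = \sum_i a i by apply: eq_bigr => i _; rewrite ger0_norm.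
have norm1_neq0 : norm1 a != 0.
  apply/negP => /eqP; rewrite norm1E => /psumr_eq0P a0.
  by move: a_neq0; rewrite (introT forallP) // => i; rewrite a0.
rewrite /u /dot; under eq_bigr => i _ do rewrite mulrBr.
rewrite sumrB -mulr_suml -norm1E.
have -> : \sum_i l i * (a i / norm1 a) = (\sum_i a i * l i) / norm1 a.
  by rewrite mulr_suml; apply: eq_bigr => i _; rewrite mulrCA mulrA.
by rewrite (mulrC (norm1 a)) divfK // subrr.
Qed.

Lemma potential_step (l : vec R n) {xbar r v x' : vec R n} :
  x' = g xbar (pos (fun i => r i + v i)) ->
  sqnorm2 (pos (fun i => r i + u x' l i))
    <= sqnorm2 (pos r) + sqnorm2 (fun i => u x' l i - v i).
Proof.
move=> x'_def; set d := fun i => u x' l i - v i.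
have cross0 : \sum_i Num.max (r i + v i) 0 * (v i + d i) = 0.
  rewrite -[RHS](g_orthogonal xbar l _ (pos_nonneg (fun i => r i + v i))) -x'_def /dot.
  by apply: eq_bigr => i _; congr (_ * _); rewrite /d addrC subrK.
apply: (le_trans (y := \sum_i (Num.max (r i) 0 ^+ 2
           + 2 * Num.max (r i + v i) 0 * (v i + d i) + d i ^+ 2))).
  apply: ler_sum => i _; rewrite /pos.
  have -> : r i + u x' l i = r i + v i + d i by rewrite /d; ring.
  exact: pos_part_sq_step.
rewrite !big_split /=.
under [X in _ + X + _]eq_bigr => i _ do rewrite -mulrA.
by rewrite -mulr_sumr cross0 mulr0 addr0.
Qed.

End OrthantGeometry.

Section RegretFromPotential.
Context {R : realType} {n : nat}.

Lemma pred_errS (x m l : nat -> vec R n) (T : nat) :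
  pred_err x m l T.+1 = pred_err x m l T
    + sqnorm2 (fun i => u (x T.+1) (l T.+1) i - u (x T) (m T.+1) i).
Proof.
rewrite /pred_err big_nat_recr //=; congr (_ + sqnorm2 _).
by apply: functional_extensionality => i; rewrite /u; ring.
Qed.

Lemma regret_cumulative_payoff (x l : nat -> vec R n)
    (T : nat) (xhat : vec R n) :
  \sum_i xhat i = 1 ->
  regret x l T xhat = dot xhat (fun i => \sum_(1 <= t < T.+1) u (x t) (l t) i).
Proof.
move=> xhat_sum1; rewrite /dot.
under [RHS]eq_bigr => i _ do rewrite mulr_sumr.
rewrite exchange_big /regret; apply: eq_bigr => t _.
rewrite /u /dot; under [RHS]eq_bigr => i _ do rewrite mulrBr.
rewrite sumrB -mulr_suml xhat_sum1 mul1r.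
under eq_bigr => i _ do rewrite mulrBr.
by rewrite sumrB; congr (_ - _); apply: eq_bigr => i _; rewrite mulrC.
Qed.

Lemma simplex_average_le (xhat y q : vec R n) (P : R) :
  in_simplex xhat -> (forall i, y i <= q i) -> sqnorm2 (pos q) <= P ->
  dot xhat y <= Num.sqrt P.
Proof.
move=> [xhat_ge0 xhat_sum1] y_le_q q_pot.
have y_le i : y i <= Num.sqrt P.
  apply: (le_trans (y_le_q i)); apply: (le_trans (y := pos q i)).
    by rewrite /pos le_max lexx.
  rewrite -(ger0_norm (pos_nonneg q i)) -sqrtr_sqr ler_wsqrtr //.
  apply: le_trans q_pot; rewrite /sqnorm2 (bigD1 i) //= lerDl.
  by apply: sumr_ge0 => j _; rewrite sqr_ge0.
apply: (le_trans (y := \sum_i xhat i * Num.sqrt P)).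
  by apply: ler_sum => i _; rewrite ler_wpM2l.
by rewrite -mulr_suml xhat_sum1 mul1r.
Qed.

(* Regret bound from a potential bound: if the cumulative payoff is dominated
   by q and ||[q]^+||^2 <= P then R^T(xhat) <= sqrt 2 sqrt P (the factor
   sqrt 2 >= 1 is slack). *)
Lemma regret_le_potential {x l : nat -> vec R n} {T : nat} {xhat q : vec R n} {P : R} :
  in_simplex xhat ->
  (forall i, \sum_(1 <= t < T.+1) u (x t) (l t) i <= q i) ->
  sqnorm2 (pos q) <= P ->
  regret x l T xhat <= Num.sqrt 2 * Num.sqrt P.
Proof.
move=> xhat_simplex cum_le_q q_pot.
rewrite regret_cumulative_payoff; last by case: xhat_simplex.
apply: (le_trans (y := Num.sqrt P)); first exact: simplex_average_le cum_le_q q_pot.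
rewrite ler_peMl ?sqrtr_ge0 //.
by rewrite -[leLHS]sqrtr1 ler_wsqrtr //; lra.
Qed.

End RegretFromPotential.

Section RegretMatchingDynamics.
Context {R : realType} {n : nat}.
Variables (xbar : vec R n) (m l : nat -> vec R n).

Local Notation x := (prm_x xbar m l).
Local Notation r t := (prm_state xbar m l t).1.
Local Notation xp := (prmp_x xbar m l).
Local Notation z t := (prmp_state xbar m l t).1.

Lemma prm_xS t : x t.+1 = g xbar (pos (fun i => r t i + u (x t) (m t.+1) i)).
Proof.
rewrite /prm_x /=; case: (prm_state xbar m l t) => r0 x0 /=.
by congr (g xbar (pos _)); apply: functional_extensionality => i; rewrite /u addrA.
Qed.

Lemma prm_rS t : r t.+1 = (fun i => r t i + u (x t.+1) (l t.+1) i).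
Proof.
rewrite /prm_x /=; case: (prm_state xbar m l t) => r0 x0 /=.
by apply: functional_extensionality => i; rewrite /u addrA.
Qed.

Lemma prmp_xS t : xp t.+1 = g xbar (pos (fun i => z t i + u (xp t) (m t.+1) i)).
Proof.
rewrite /prmp_x /=; case: (prmp_state xbar m l t) => z0 x0 /=.
by congr (g xbar (pos _)); apply: functional_extensionality => i; rewrite /u addrA.
Qed.

Lemma prmp_zS t : z t.+1 = pos (fun i => z t i + u (xp t.+1) (l t.+1) i).
Proof.
rewrite /prmp_x /=; case: (prmp_state xbar m l t) => z0 x0 /=.
by congr (pos _); apply: functional_extensionality => i; rewrite /u addrA.
Qed.

Lemma prm_r_cumulative t i : r t i = \sum_(1 <= tau < t.+1) u (x tau) (l tau) i.
Proof.
elim: t => [|t IH]; first by rewrite big_geq.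
by rewrite prm_rS big_nat_recr //= IH.
Qed.

Lemma prmp_z_dominates t i : \sum_(1 <= tau < t.+1) u (xp tau) (l tau) i <= z t i.
Proof.
elim: t => [|t IH]; first by rewrite big_geq.
rewrite prmp_zS big_nat_recr //= /pos.
by apply: (le_trans (y := z t i + u (xp t.+1) (l t.+1) i)); rewrite ?lerD2r ?le_max ?lexx.
Qed.

Lemma prm_potential T : sqnorm2 (pos (r T)) <= pred_err x m l T.
Proof.
elim: T => [|T IH].
  by rewrite /pred_err big_geq //= /sqnorm2 big1 // => i _; rewrite /pos maxxx expr0n.
rewrite pred_errS prm_rS.
apply: le_trans (potential_step (l T.+1) (prm_xS T)) _.
by rewrite lerD2r.
Qed.

Lemma prmp_potential T : sqnorm2 (pos (z T)) <= pred_err xp m l T.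
Proof.
elim: T => [|T IH].
  by rewrite /pred_err big_geq //= /sqnorm2 big1 // => i _; rewrite /pos maxxx expr0n.
have pos_idem (a : vec R n) : pos (pos a) = pos a.
  by apply: functional_extensionality => i; rewrite /pos -maxA maxxx.
rewrite pred_errS prmp_zS pos_idem.
apply: le_trans (potential_step (l T.+1) (prmp_xS T)) _.
by rewrite lerD2r.
Qed.

End RegretMatchingDynamics.

Section OptimizationViewpoint.
Context {R : realType} {n : nat}.
Context {xbar : vec R n} {m l : nat -> vec R n} {eta : R}.
Hypothesis eta_gt0 : 0 < eta.

Local Notation x := (prm_x xbar m l).
Local Notation r t := (prm_state xbar m l t).1.
Local Notation xp := (prmp_x xbar m l).
Local Notation zp t := (prmp_state xbar m l t).1.

(* (i) Predictive FTRL on the orthant with regularizer ||.||^2 / (2 eta):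
   its leader is eta [r^t + u(x^t, m^{t+1})]^+, which g normalizes to the
   PRM decision. *)
Lemma ftrl_iterates_are_prm {theta y : nat -> vec R n} :
  y 0%N = @unifv R n ->
  (forall t : nat, (0 < t)%N ->
     is_argmin
       (fun th : vec R n =>
          dot (fun i => - (\sum_(1 <= tau < t) u (y tau) (l tau) i)
                        - (dot (m t) (y t.-1) - m t i)) th
          + (2 * eta)^-1 * sqnorm2 th)
       (@nonneg R n) (theta t)
     /\ y t = g xbar (theta t)) ->
  forall t, y t = x t.
Proof.
move=> y0 ftrl.
suff agree t s : (s <= t)%N -> y s = x s by move=> t; exact: agree.
elim: t s => [|t IH] s; first by rewrite leqn0 => /eqP ->.
rewrite leq_eqVlt ltnS => /predU1P [-> | ]; last exact: IH.
have [th_min y_def] := ftrl t.+1 isT.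
have cum_eq : (fun i => \sum_(1 <= tau < t.+1) u (y tau) (l tau) i) = r t.
  apply: functional_extensionality => i; rewrite prm_r_cumulative.
  by apply: eq_big_nat => tau /andP [_ tau_le]; rewrite IH.
have theta_eq := @argmin_prox_orthant _ _ _
  (fun i => - (\sum_(1 <= tau < t.+1) u (y tau) (l tau) i) - u (y t) (m t.+1) i)
  (@zerov R n) _ _ eta_gt0 _ th_min.
rewrite y_def {}theta_eq; last first.
  by move=> th; congr (_ + _ * _); apply: eq_bigr => i _; rewrite /zerov subr0.
rewrite prm_xS -[RHS](g_pscale _ _ eta_gt0) -pos_pscale //; congr (g xbar (pos _)).
by apply: functional_extensionality => i; rewrite -cum_eq -IH //= /zerov; ring.
Qed.

(* (ii) Predictive OMD on the orthant: both proximal steps are projections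
   onto the orthant, and by induction z^t (OMD) = eta z^t (PRM+), so the
   normalized decisions coincide. *)
Lemma omd_iterates_are_prmp {theta zo y : nat -> vec R n} :
  zo 0%N = @zerov R n -> y 0%N = @unifv R n ->
  (forall t : nat, (0 < t)%N ->
     is_argmin
       (fun th : vec R n =>
          dot (fun i => - (dot (m t) (y t.-1) - m t i)) th
          + (2 * eta)^-1 * sqnorm2 (fun i => th i - zo t.-1 i))
       (@nonneg R n) (theta t)
     /\ y t = g xbar (theta t)
     /\ is_argmin
       (fun zz : vec R n =>
          dot (fun i => - u (y t) (l t) i) zz
          + (2 * eta)^-1 * sqnorm2 (fun i => zz i - zo t.-1 i))
       (@nonneg R n) (zo t)) ->
  forall t, y t = xp t.
Proof.
move=> zo0 y0 omd.
suff agree t : y t = xp t /\ zo t = (fun i => eta * zp t i) by move=> t; case: (agree t).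
elim: t => [|t [IHy IHz]].
  by rewrite y0 zo0; split=> //; apply: functional_extensionality => i; rewrite mulr0.
have [th_min [y_def zo_min]] := omd t.+1 isT.
have theta_eq := argmin_prox_orthant eta_gt0 (fun _ => erefl) th_min.
have zo_eq := argmin_prox_orthant eta_gt0 (fun _ => erefl) zo_min.
have y_eq : y t.+1 = xp t.+1.
  rewrite y_def theta_eq prmp_xS -[RHS](g_pscale _ _ eta_gt0) -pos_pscale //.
  congr (g xbar (pos _)); apply: functional_extensionality => i.
  by rewrite /= IHz IHy /u; ring.
split=> //; rewrite zo_eq prmp_zS -pos_pscale //; congr pos.
by apply: functional_extensionality => i; rewrite /= IHz y_eq; ring.
Qed.

End OptimizationViewpoint.

Theorem mainTheorem7 (R : realType) (n : nat) (hn : (0 < n)%N)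
  (xbar : vec R n) (hxbar : in_simplex xbar)
  (eta : R) (heta : 0 < eta) (m l : nat -> vec R n) :
  (* (i) predictive FTRL produces the iterates of PRM *)
  (forall theta x : nat -> vec R n,
     x 0%N = @unifv R n ->
     (forall t : nat, (0 < t)%N ->
        is_argmin
          (fun th : vec R n =>
             dot (fun i => - (\sum_(1 <= tau < t) u (x tau) (l tau) i)
                           - (dot (m t) (x t.-1) - m t i)) th
             + (2 * eta)^-1 * sqnorm2 th)
          (@nonneg R n) (theta t)
        /\ x t = g xbar (theta t)) ->
     forall t i, x t i = prm_x xbar m l t i)
  /\
  (* (ii) predictive OMD produces the iterates of PRM+ *)
  (forall theta z x : nat -> vec R n,
     z 0%N = @zerov R n ->
     x 0%N = @unifv R n ->
     (forall t : nat, (0 < t)%N ->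
        is_argmin
          (fun th : vec R n =>
             dot (fun i => - (dot (m t) (x t.-1) - m t i)) th
             + (2 * eta)^-1 * sqnorm2 (fun i => th i - z t.-1 i))
          (@nonneg R n) (theta t)
        /\ x t = g xbar (theta t)
        /\ is_argmin
          (fun zz : vec R n =>
             dot (fun i => - u (x t) (l t) i) zz
             + (2 * eta)^-1 * sqnorm2 (fun i => zz i - z t.-1 i))
          (@nonneg R n) (z t)) ->
     forall t i, x t i = prmp_x xbar m l t i)
  /\
  (* (iii) regret bounds for PRM and PRM+ *)
  (forall (T : nat) (xhat : vec R n), (1 <= T)%N -> in_simplex xhat ->
     regret (prm_x xbar m l) l T xhat
       <= Num.sqrt 2 * Num.sqrt (pred_err (prm_x xbar m l) m l T))
  /\
  (forall (T : nat) (xhat : vec R n), (1 <= T)%N -> in_simplex xhat ->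
     regret (prmp_x xbar m l) l T xhat
       <= Num.sqrt 2 * Num.sqrt (pred_err (prmp_x xbar m l) m l T)).
Proof.
split.
  by move=> theta x x0 ftrl t i; rewrite (ftrl_iterates_are_prm heta x0 ftrl).
split.
  by move=> theta z x z0 x0 omd t i; rewrite (omd_iterates_are_prmp heta z0 x0 omd).
split=> T xhat _ xhat_simplex.
- apply: regret_le_potential xhat_simplex _ (prm_potential xbar m l T) => i.
  by rewrite prm_r_cumulative.
- exact: regret_le_potential xhat_simplex
    (prmp_z_dominates xbar m l T) (prmp_potential xbar m l T).
Qed.
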